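(* Let $v$ be an odd positive integer and $k$ a positive integer. Every $(v,k)$ cyclic difference packing $(\mathbb{Z}_v,\mathcal{D})$ is a $(v,k,1)$ non-half-sum disjoint packing, i.e., $(\mathbb{Z}_v,\{\mathcal{D}\})$ is a $(v,k,1)$ NHSDP.
   Context: A $(v,k)$ cyclic difference packing (CDP) is a pair $(\mathbb{Z}_v,\mathcal{D})$ where $\mathcal{D}=\{d_1,\dots,d_k\}$ is a $k$-subset of $\mathbb{Z}_v$ such that each non-zero element of $\mathbb{Z}_v$ has at most one representation as a difference $d_i-d_j$ with $d_i,d_j\in\mathcal{D}$. For odd $v$, a $(v,g,b)$ non-half-sum disjoint packing (NHSDP) is a pair $(\mathbb{Z}_v,\mathfrak{D})$ where $\mathfrak{D}$ is a family of $b$ subsets (''blocks'') of $\mathbb{Z}_v$, each of size $g$, such that (i) any two different blocks are disjoint, and (ii) for each block $\mathcal{D}\in\mathfrak{D}$ and any two different elements $x,y\in\mathcal{D}$, the half-sum $(x+y)\cdot2^{-1}\in\mathbb{Z}_v$ does not belong to any block of $\mathfrak{D}$. *)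

From mathcomp Require Import all_boot.
Unset Printing Implicit Defensive.

(* Z_v is modelled by 'I_v with arithmetic modulo v (this covers v = 1 too,
   unlike mathcomp's 'Z_v). *)

Definition zdiff {v : nat} (x y : 'I_v) : nat := (x + (v - y)) %% v.

(* half-sum (x + y) * 2^{-1} in Z_v, for v odd: 2^{-1} = (v+1)/2 mod v *)
Definition zhalfsum {v : nat} (x y : 'I_v) : nat := ((x + y) * (v.+1)./2) %% v.

Definition is_CDP (v k : nat) (D : {set 'I_v}) : Prop :=
  #|D| = k /\
  forall d : nat, 0 < d < v ->
    #|[set p in setX D D | zdiff (v:=v) p.1 p.2 == d]| <= 1.

Definition is_NHSDP (v g b : nat) (F : {set {set 'I_v}}) : Prop :=
  #|F| = b /\
  (forall B, B \in F -> #|B| = g) /\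
  (forall B1 B2, B1 \in F -> B2 \in F -> B1 != B2 -> [disjoint B1 & B2]) /\
  (forall B, B \in F -> forall x y : 'I_v, x \in B -> y \in B -> x != y ->
     forall B', B' \in F -> forall z : 'I_v, z \in B' -> (z : nat) <> zhalfsum (v:=v) x y).

(** If z is the half-sum of two distinct points x, y of a block, then
    z - x = y - z is a non-zero difference represented by the two distinct
    pairs (z, x) and (y, z), which a cyclic difference packing forbids. *)

From mathcomp Require Import all_boot.
From mathcomp Require Import zify.

Lemma zdiffE (v : nat) (x y : 'I_v) :
  zdiff x y = if y <= x then x - y else x + v - y.
Proof.
have xv := ltn_ord x; have yv := ltn_ord y.
rewrite /zdiff; case: leqP => yx.
- by rewrite (_ : x + (v - y) = x - y + v) ?modnDr ?modn_small //; lia.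
- by rewrite modn_small; lia.
Qed.

Lemma zdiff_lt (v : nat) (x y : 'I_v) : zdiff x y < v.
Proof. have xv := ltn_ord x; rewrite zdiffE; case: (leqP y x) => yx; lia. Qed.

Lemma zdiff_eq0 (v : nat) (x y : 'I_v) : (zdiff x y == 0) = (x == y).
Proof.
have yv := ltn_ord y; rewrite zdiffE -val_eqE /=; case: leqP => yx; apply/eqP/eqP; lia.
Qed.

Lemma zdiffxx (v : nat) (x : 'I_v) : zdiff x x = 0.
Proof. by apply/eqP; rewrite zdiff_eq0. Qed.

Lemma zhalfsum_double (v : nat) (x y : 'I_v) :
  odd v -> zhalfsum x y * 2 = x + y %[mod v].
Proof.
move=> ov; have half2 : (v.+1)./2 * 2 = v + 1.
  by have := odd_double_half v.+1; rewrite /= ov /= -muln2; lia.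
by rewrite modnMml -mulnA half2 mulnDr muln1 -modnDml modnMl.
Qed.

Lemma zdiff_mid {v : nat} {x y z : 'I_v} :
  z * 2 = x + y %[mod v] -> zdiff z x = zdiff y z.
Proof.
move=> z_mid; have xv := ltn_ord x; have zv := ltn_ord z.
rewrite /zdiff; apply/eqP; rewrite -(eqn_modDr (z + x)).
rewrite (_ : z + (v - x) + (z + x) = z * 2 + v); last by lia.
rewrite (_ : y + (v - z) + (z + x) = x + y + v); last by lia.
by rewrite -modnDml z_mid modnDml.
Qed.

Lemma CDP_diff_inj {v k : nat} {D : {set 'I_v}} {a b c d : 'I_v} :
  is_CDP v k D -> a \in D -> b \in D -> c \in D -> d \in D -> a != b ->
  zdiff a b = zdiff c d -> (a, b) = (c, d).
Proof.
move=> [_ packD] aD bD cD dD ab eq_diff.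
have diff_range : 0 < zdiff a b < v by rewrite zdiff_lt lt0n zdiff_eq0 ab.
by apply: (card_le1_eqP (packD _ diff_range)); rewrite !inE /= eq_diff eqxx ?aD ?bD ?cD ?dD.
Qed.

Theorem lemma5 (v k : nat) (D : {set 'I_v}) :
  odd v -> 0 < k -> is_CDP v k D -> is_NHSDP v k 1 [set D].
Proof.
move=> ov _ cdpD.
split; first by rewrite cards1.
split; first by move=> B /set1P ->; case: cdpD.
split; first by move=> B1 B2 /set1P -> /set1P ->; rewrite eqxx.
move=> _ /set1P -> x y xD yD xy _ /set1P -> z zD zE.
have diff_eq : zdiff z x = zdiff y z.
  by apply: zdiff_mid; rewrite zE zhalfsum_double.
have zx : z != x.
  by apply: contraNneq xy => zx; move: diff_eq; rewrite zx zdiffxx eq_sym -zdiff_eq0 => <-.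
have [zy _] := CDP_diff_inj cdpD zD xD yD zD zx diff_eq.
by move: diff_eq; rewrite zy zdiffxx => /eqP; rewrite zdiff_eq0 eq_sym (negbTE xy).
Qed.
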